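(* Let $G$ be a finite abstract simplicial complex with connection matrix $L$, and let $g=L^{-1}$ (which exists and has integer entries). Then $\sum_{x,y\in G} g(x,y)=\chi(G)$, where $\chi(G)=\sum_{x\in G}\omega(x)$.
   Context: A finite abstract simplicial complex $G$ is a finite set of non-empty finite sets closed under taking non-empty subsets; its elements are called simplices. For $x\in G$ let $\dim(x)=|x|-1$ and $\omega(x)=(-1)^{\dim(x)}$. The connection matrix $L$ of $G$ is indexed by the simplices with $L(x,y)=1$ if $x\cap y\neq\emptyset$ and $L(x,y)=0$ otherwise. $\chi(G)=\sum_{x\in G}\omega(x)$ is the Euler characteristic. *)

From mathcomp Require Import all_boot all_order all_algebra.
Set Implicit Arguments. Unset Strict Implicit. Unset Printing Implicit Defensive.
Import GRing.Theory Num.Theory.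
Local Open Scope ring_scope.

Definition simplicial_complex (V : finType) (G : {set {set V}}) : Prop :=
  set0 \notin G /\
  forall x y : {set V}, x \in G -> y \subset x -> y != set0 -> y \in G.

Definition omega (V : finType) (x : {set V}) : int := (-1) ^+ (#|x|.-1).

Definition euler_char (V : finType) (G : {set {set V}}) : int :=
  \sum_(x in G) omega x.

Definition simplex (V : finType) (G : {set {set V}}) (i : 'I_#|G|) : {set V} :=
  enum_val i.

Definition connection_matrix (V : finType) (G : {set {set V}}) : 'M[int]_#|G| :=
  \matrix_(i, j) (if [disjoint simplex i & simplex j] then 0 else 1).

From mathcomp Require Import all_boot all_order all_algebra.
Import GRing.Theory Num.Theory.
Local Open Scope ring_scope.

(* Let Z(x, y) = [x ⊆ y] be the incidence matrix of G and D = diag(ω). Since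
   the non-empty subsets of a non-empty set have alternating sum Σ ω = 1, and
   every such subset of x ∩ y is again in G, one gets L = Zᵀ D Z. Möbius
   inversion on the subset lattice makes Z invertible, and D² = 1, so
   Z L⁻¹ Zᵀ = D. The same alternating sum gives Zᵀ ω = 1, hence
   Σ g(x, y) = 1ᵀ L⁻¹ 1 = ωᵀ Z L⁻¹ Zᵀ ω = ωᵀ D ω = Σ ω³ = χ(G). *)

Lemma sum_sign_interval {T : finType} (A B : {set T}) :
  \sum_(z : {set T} | (A \subset z) && (z \subset B)) (-1 : int) ^+ #|z|
    = (A == B)%:R * (-1) ^+ #|A|.
Proof.
have [AB | nAB] := boolP (A \subset B); last first.
  rewrite big_pred0 => [|z]; last first.
    by apply: contraNF nAB => /andP[Az zB]; apply: subset_trans zB.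
  have /negbTE-> : A != B by apply: contraNneq nAB => ->.
  by rewrite mul0r.
have [<- | neqAB] := eqVneq A B.
  by rewrite (big_pred1 A) ?mul1r // => z; rewrite /= eqEsubset andbC.
rewrite mul0r.
have [a /setDP[aB aNA]] : exists a, a \in B :\: A.
  apply/set0Pn; rewrite setD_eq0.
  by apply: contra neqAB => BA; rewrite eqEsubset AB.
pose toggle (z : {set T}) := if a \in z then z :\ a else a |: z.
have toggleK : involutive toggle.
  move=> z; rewrite /toggle; have [az | aNz] := boolP (a \in z).
    by rewrite setD11 setD1K.
  by rewrite setU11 setU1K.
have toggle_sign (z : {set T}) : (-1 : int) ^+ #|toggle z| = - (-1) ^+ #|z|.
  rewrite /toggle; have [az | aNz] := boolP (a \in z).
    by rewrite [in RHS](cardsD1 a) az exprS mulN1r opprK.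
  by rewrite cardsU1 aNz exprS mulN1r.
have toggle_interval (z : {set T}) : (A \subset z) && (z \subset B) ->
    (A \subset toggle z) && (toggle z \subset B).
  case/andP=> Az zB; rewrite /toggle; case: (a \in z).
    by rewrite subsetD1 Az aNA (subset_trans (subD1set z a) zB).
  by rewrite subUset sub1set aB zB (subset_trans Az (subsetUr _ _)).
set S := LHS; have S_opp : S = - S.
  rewrite {1}/S (reindex_inj (can_inj toggleK)) -sumrN.
  apply: eq_big => [z | z _]; last exact: toggle_sign.
  apply/idP/idP; first by move/toggle_interval; rewrite toggleK.
  exact: toggle_interval.
have : S *+ 2 == 0 by rewrite mulr2n {2}S_opp subrr.
by rewrite mulrn_eq0 => /eqP.
Qed.

Lemma omega_neq0 {T : finType} (x : {set T}) :
  x != set0 -> omega x = - (-1) ^+ #|x|.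
Proof.
rewrite -card_gt0 /omega => x_gt0.
by rewrite -{2}(prednK x_gt0) exprS mulN1r opprK.
Qed.

Lemma omega_cube {T : finType} (x : {set T}) :
  omega x * omega x * omega x = omega x.
Proof. by rewrite /omega -expr2 sqrr_sign mul1r. Qed.

Lemma sum_omega_nonempty_subsets {T : finType} (S : {set T}) :
  \sum_(z : {set T} | (z \subset S) && (z != set0)) omega z = (S != set0)%:R.
Proof.
rewrite (eq_bigr (fun z : {set T} => - (-1 : int) ^+ #|z|)); last first.
  by move=> z /andP[_]; apply: omega_neq0.
have := sum_sign_interval set0 S.
rewrite (bigD1 set0) ?sub0set //= cards0 expr0 mulr1 eq_sym sumrN.
under eq_bigl => z do rewrite sub0set.
move=> sum_signs; rewrite -[X in - X](addKr 1) sum_signs.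
by case: eqP; rewrite ?addNr ?oppr0 ?addr0 ?opprK.
Qed.

Lemma sum_enum_val_indicator (R : pzRingType) {T : finType} (A : {set T})
    (P : pred T) (F : T -> R) :
  {subset P <= A} ->
  \sum_(k < #|A|) (P (enum_val k))%:R * F (enum_val k) = \sum_(x | P x) F x.
Proof.
move=> sPA; rewrite (eq_bigl (fun x => (x \in A) && P x)); last first.
  by move=> x /=; case Px: (P x); rewrite ?andbF ?sPA.
rewrite big_enum_val_cond [RHS]big_mkcond; apply: eq_bigr => k _.
by case: (P _); rewrite ?mul1r ?mul0r.
Qed.

Lemma sum_mx_entries (R : pzRingType) m n (A : 'M[R]_(m, n)) :
  \sum_i \sum_j A i j
    = ((const_mx 1 : 'cV_m)^T *m A *m (const_mx 1 : 'cV_n)) 0 0.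
Proof.
rewrite mxE exchange_big; apply: eq_bigr => j _; rewrite !mxE mulr1.
by apply: eq_bigr => i _; rewrite !mxE mul1r.
Qed.

Lemma invmx_congruence (R : comUnitRingType) n (Z D : 'M[R]_n) :
  Z \in unitmx -> D *m D = 1%:M -> Z *m invmx (Z^T *m D *m Z) *m Z^T = D.
Proof.
move=> Z_unit DD; have ZT_unit : Z^T \in unitmx by rewrite unitmx_tr.
have L_unit : Z^T *m D *m Z \in unitmx.
  by rewrite !unitmx_mul ZT_unit Z_unit (mulmx1_unit DD).1.
set X := Z *m _ *m _.
have DX : D *m X = 1%:M.
  by apply: (can_inj (mulKmx ZT_unit)); rewrite mulmx1 !mulmxA mulmxV // mul1mx.
by rewrite -[X]mul1mx -DD -mulmxA DX mulmx1.
Qed.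

Section ConnectionMatrix.

Context {V : finType} (G : {set {set V}}).

Definition incidence_mx : 'M[int]_#|G| :=
  \matrix_(i, j) (simplex i \subset simplex j)%:R.

Definition mobius_mx : 'M[int]_#|G| :=
  \matrix_(i, j) ((simplex i \subset simplex j)%:R
                  * (-1) ^+ #|simplex i| * (-1) ^+ #|simplex j|).

Definition omega_row : 'rV[int]_#|G| := \row_i omega (simplex i).

Definition omega_mx : 'M[int]_#|G| := diag_mx omega_row.

Lemma omega_mxK : omega_mx *m omega_mx = 1%:M.
Proof.
apply/matrixP => i j; rewrite /omega_mx mul_diag_mx !mxE.
have [-> | nij] := eqVneq i j; last by rewrite mulr0n mulr0.
by rewrite !mulr1n -expr2 sqrr_sign.
Qed.

Hypothesis G_complex : simplicial_complex G.

Lemma simplex_neq0 (i : 'I_#|G|) : simplex i != set0.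
Proof. by apply: contraNneq G_complex.1 => <-; apply: enum_valP. Qed.

Lemma mul_incidence_mobius : incidence_mx *m mobius_mx = 1%:M.
Proof.
apply/matrixP => i j; rewrite !mxE.
under eq_bigr => k _ do rewrite !mxE !mulrA -natrM mulnb.
rewrite -big_distrl /= (sum_enum_val_indicator _ _
  (fun z : {set V} => (simplex i \subset z) && (z \subset simplex j))
  (fun z => (-1) ^+ #|z|)) => [|z /andP[iz zj]]; last first.
  apply: G_complex.2 (enum_valP j) zj _.
  by apply: contraNneq (simplex_neq0 i) => z0; rewrite -subset0 -z0.
rewrite sum_sign_interval (inj_eq enum_val_inj).
have [<- | _] := eqVneq i j; last by rewrite !mul0r.
by rewrite mul1r -expr2 sqrr_sign.
Qed.

Lemma incidence_mx_unit : incidence_mx \in unitmx.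
Proof. exact: (mulmx1_unit mul_incidence_mobius).1. Qed.

Lemma sum_omega_faces (x S : {set V}) : x \in G -> S \subset x ->
  \sum_(k < #|G|) (simplex k \subset S)%:R * omega (simplex k) = (S != set0)%:R.
Proof.
move=> xG Sx; rewrite -sum_omega_nonempty_subsets -(sum_enum_val_indicator _ G).
  by apply: eq_bigr => k _; rewrite simplex_neq0 andbT.
by move=> z /andP[zS z_neq0]; exact: G_complex.2 xG (subset_trans zS Sx) z_neq0.
Qed.

Lemma connection_mx_factor :
  connection_matrix G = incidence_mx^T *m omega_mx *m incidence_mx.
Proof.
apply/matrixP => i j; rewrite -mulmxA mul_diag_mx !mxE.
under eq_bigr => k _ do rewrite !mxE mulrCA -natrM mulnb -subsetI mulrC.
rewrite (sum_omega_faces _ _ (enum_valP i)) ?subsetIl // setI_eq0.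
by case: [disjoint _ & _].
Qed.

Lemma incidence_tr_omega : incidence_mx^T *m omega_row^T = const_mx 1.
Proof.
apply/matrixP => i j; rewrite !mxE.
under eq_bigr => k _ do rewrite !mxE.
by rewrite (sum_omega_faces _ _ (enum_valP i)) // simplex_neq0.
Qed.

End ConnectionMatrix.

Theorem theorem2 (V : finType) (G : {set {set V}}) :
  simplicial_complex G ->
  connection_matrix G \in unitmx /\
  \sum_(i < #|G|) \sum_(j < #|G|) (invmx (connection_matrix G)) i j = euler_char G.
Proof.
move=> G_complex; have Z_unit := incidence_mx_unit G G_complex.
rewrite (connection_mx_factor G G_complex); split.
  by rewrite !unitmx_mul unitmx_tr Z_unit (mulmx1_unit (omega_mxK G)).1.
rewrite sum_mx_entries -(incidence_tr_omega G G_complex).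
rewrite trmx_mul !trmxK mulmxA -2!(mulmxA (omega_row G)).
rewrite invmx_congruence ?omega_mxK // mul_mx_diag mxE.
rewrite /euler_char [RHS]big_enum_val.
by apply: eq_bigr => k _; rewrite !mxE omega_cube.
Qed.
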